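(* Let $A$ be a $p$-torsion free ring with a ring endomorphism $\phi$ satisfying $\phi(a)\equiv a^p\pmod{pA}$ for all $a\in A$. For every $a\in A$ and $n\ge1$: (i) $[a]=s_\phi(a)+Vs_\phi(\Delta_1(a))+\cdots+V^{n-1}s_\phi(\Delta_{n-1}(a))+V^n[\Delta_n(a)]$ in $W_{n+1}(A)$; (ii) $a^{p^n}=\sum_{s=0}^n p^s\phi^{n-s}(\Delta_s(a))$; (iii) $p^{n-1}\Delta_n(a)=\Delta_1(a^{p^{n-1}})$; (iv) for $n\ge2$, $\Delta_n(a)\equiv a^{p^n-p}\Delta_1(a)+a^{p^n-2p}\Delta_1(a)^p\pmod p$ if $p=2$, and $\Delta_n(a)\equiv a^{p^n-p}\Delta_1(a)\pmod p$ if $p$ is odd.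
   Context: $W(A)$, $W_n(A)$: $p$-typical Witt vectors (of length $n$), $[a]$ Teichmüller lift, $V$ Verschiebung, ghost components $\varphi_m(a_0,a_1,\dots)=\sum_{i=0}^mp^ia_i^{p^{m-i}}$. $s_\phi:A\to W(A)$ is the unique ring map with $\varphi_m(s_\phi(a))=\phi^m(a)$ for all $m$ (also composed with restriction to $W_n(A)$). Define $\Delta_{W_n}:W_n(A)\to W_{n-1}(A)$ by $V\Delta_{W_n}(\alpha)=\alpha-s_\phi(a_0)$ for $\alpha=(a_0,\dots,a_{n-1})$. Set $\Delta_0(a)=a$ and $\Delta_s(a)=\Delta_{W_2}\circ\cdots\circ\Delta_{W_{s+1}}([a])\in A$ for $s\ge1$; in particular $\Delta_1(a)=(a^p-\phi(a))/p$. *)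

From HB Require Import structures.
From mathcomp Require Import all_boot all_order all_algebra.
From Stdlib Require Import ClassicalEpsilon.

Set Implicit Arguments.
Unset Strict Implicit.
Unset Printing Implicit Defensive.

Import GRing.Theory.
Local Open Scope ring_scope.

(* A Witt vector (a_0, a_1, ...) is a sequence nat -> A; its image in W_n(A)
   is its truncation to the first n components. *)

Definition ghost (A : comPzRingType) (p : nat) (x : nat -> A) (m : nat) : A :=
  \sum_(i < m.+1) (p ^ i)%N%:R * x i ^+ (p ^ (m - i))%N.

Definition teich (A : comPzRingType) (a : A) : nat -> A :=
  fun i => if i is 0%N then a else 0.

Definition verschiebung (A : comPzRingType) (x : nat -> A) : nat -> A :=
  fun i => if i is j.+1 then x j else 0.

Definition wzero (A : comPzRingType) : nat -> A := fun _ => 0.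

(* Witt addition / subtraction: the (unique, for p-torsion-free A) Witt vector
   whose ghost components are the sums / differences of the ghost components. *)
Definition wadd (A : comPzRingType) (p : nat) (x y : nat -> A) : nat -> A :=
  epsilon (inhabits (wzero A))
    (fun z => forall m, ghost p z m = ghost p x m + ghost p y m).

Definition wsub (A : comPzRingType) (p : nat) (x y : nat -> A) : nat -> A :=
  epsilon (inhabits (wzero A))
    (fun z => forall m, ghost p z m = ghost p x m - ghost p y m).

Definition s_phi (A : comPzRingType) (p : nat) (phi : A -> A) (a : A) : nat -> A :=
  epsilon (inhabits (wzero A))
    (fun z => forall m, ghost p z m = iter m phi a).

(* Delta_{W}: V (DeltaW alpha) = alpha - s_phi(a_0). *)
Definition DeltaW (A : comPzRingType) (p : nat) (phi : A -> A) (x : nat -> A)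
  : nat -> A :=
  fun i => wsub p x (s_phi p phi (x 0%N)) i.+1.

(* Delta_s(a) = Delta_{W_2} o ... o Delta_{W_{s+1}} ([a]) in W_1(A) = A. *)
Definition Delta (A : comPzRingType) (p : nat) (phi : A -> A) (s : nat) (a : A) : A :=
  iter s (DeltaW p phi) (teich a) 0%N.

Definition weq_n (A : comPzRingType) (n : nat) (x y : nat -> A) : Prop :=
  forall i, (i < n)%N -> x i = y i.

From HB Require Import structures.
From mathcomp Require Import all_boot all_order all_algebra.
From mathcomp Require Import ring zify.
From Stdlib Require Import ClassicalEpsilon.

Set Implicit Arguments.
Unset Strict Implicit.
Unset Printing Implicit Defensive.

Import GRing.Theory.
Local Open Scope ring_scope.

(* Since A is p-torsion free, a Witt vector is determined by its ghost
   components, and by Dwork's lemma a sequence (w_m) is a ghost vector as soon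
   as w_(m+1) = phi(w_m) mod p^(m+1); so wadd, wsub and s_phi are what they
   should be on ghost components.  The relation V Delta_W(x) = x - s_phi(x_0)
   becomes p * w_m(Delta_W x) = w_(m+1)(x) - phi^(m+1)(x_0), and iterating it
   from [a] gives (ii), whose ghost form is (i); (iii) follows by comparing (ii)
   for a and for a^(p^(n-1)).  For (iv), (iii) reads
   p^n Delta_n(a) = X^Q - (X - p Delta_1(a))^Q with X = a^p and Q = p^(n-1):
   in the binomial expansion every term of degree >= 3, and for odd p also the
   quadratic one, is divisible by p^(n+1). *)

Lemma prime_expn_gt1 p q : prime p -> (0 < q)%N -> (1 < p ^ q)%N.
Proof. by move=> p_pr q_gt0; rewrite -[X in (X < _)%N](expn0 p) ltn_exp2l ?prime_gt1. Qed.

Lemma logn_add2_le p j : prime p -> (2 <= j)%N -> odd p || (3 <= j)%N ->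
  (logn p j + 2 <= j)%N.
Proof.
move=> p_pr j_ge2 oddp_or_j3.
have p_gt1 := prime_gt1 p_pr.
have pv_le_j : (p ^ logn p j <= j)%N.
  by apply: dvdn_leq; [lia | rewrite pfactor_dvdn //; lia].
case: (logn p j) pv_le_j => [|[|v]] pv_le_j; first lia.
- case/orP: oddp_or_j3 => [odd_p|]; last lia.
  have := odd_prime_gt2 odd_p p_pr; rewrite expn1 in pv_le_j; lia.
- have := ltn_expl v.+1 p_gt1; rewrite expnS in pv_le_j; nia.
Qed.

Lemma dvdn_bin_exp p q j : prime p -> (2 <= j <= p ^ q)%N -> odd p || (3 <= j)%N ->
  (p ^ q.+2 %| 'C(p ^ q, j) * p ^ j)%N.
Proof.
move=> p_pr /andP[j_ge2 j_le] oddp_or_j3.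
have C_gt0 : (0 < 'C(p ^ q, j))%N by rewrite bin_gt0.
have p_gt0 := prime_gt0 p_pr.
have : (p ^ q %| 'C(p ^ q, j) * j)%N.
  by rewrite mulnC -(prednK (ltnW j_ge2)) -mul_bin_diag dvdn_mulr.
rewrite !pfactor_dvdn ?muln_gt0 ?C_gt0 ?expn_gt0 ?p_gt0 //; last lia.
rewrite !lognM ?expn_gt0 ?p_gt0 //; last lia.
have := logn_add2_le p_pr j_ge2 oddp_or_j3; rewrite pfactorK //; lia.
Qed.

Lemma dvdn_bin2_exp2 q : (1 <= q)%N -> (2 ^ q.+2 %| 2 ^ 2 * 'C(2 ^ q, 2) + 2 ^ q.+1)%N.
Proof.
move=> q_gt0.
have -> : (2 ^ 2 * 'C(2 ^ q, 2) + 2 ^ q.+1 = 2 ^ (q + q.+1))%N.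
  have bin2E := mul_bin_diag (2 ^ q) 1; rewrite bin1 in bin2E.
  have : (0 < 2 ^ q)%N by rewrite expn_gt0.
  rewrite expnD !expnS; move: bin2E; set Q := (2 ^ q)%N; nia.
by rewrite dvdn_exp2l //; lia.
Qed.

Lemma exprDn_split3 (R : comPzSemiRingType) (x y : R) n : (2 <= n)%N ->
  (x + y) ^+ n = x ^+ n + x ^+ n.-1 * y *+ n + x ^+ (n - 2) * y ^+ 2 *+ 'C(n, 2)
                 + \sum_(i < n - 2) x ^+ (n - i.+3) * y ^+ i.+3 *+ 'C(n, i.+3).
Proof.
case: n => [|[|n]] // _; rewrite exprDn !big_ord_recl /= !subSS !subn0 bin0 bin1.
by rewrite expr0 mulr1 mulr1n expr1 !addrA.
Qed.

Section PDivisibility.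

Variables (A : comPzRingType) (p : nat).

Definition pdvd (k : nat) (y : A) := exists c, y = p%:R ^+ k * c.

Lemma pdvd0 k : pdvd k 0.
Proof. by exists 0; rewrite mulr0. Qed.

Lemma pdvdD k x y : pdvd k x -> pdvd k y -> pdvd k (x + y).
Proof. by move=> [c ->] [d ->]; exists (c + d); rewrite mulrDr. Qed.

Lemma pdvdN k x : pdvd k x -> pdvd k (- x).
Proof. by move=> [c ->]; exists (- c); rewrite mulrN. Qed.

Lemma pdvdB k x y : pdvd k x -> pdvd k y -> pdvd k (x - y).
Proof. by move=> dx dy; apply/pdvdD/pdvdN. Qed.

Lemma pdvdMr k x y : pdvd k x -> pdvd k (x * y).
Proof. by move=> [c ->]; exists (c * y); rewrite mulrA. Qed.

Lemma pdvd_sum k n (F : 'I_n -> A) :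
  (forall i, pdvd k (F i)) -> pdvd k (\sum_(i < n) F i).
Proof. by move=> dF; elim/big_ind: _ => //; [apply: pdvd0 | apply: pdvdD]. Qed.

Lemma pdvd_leq j k x : (j <= k)%N -> pdvd k x -> pdvd j x.
Proof.
by move=> le_jk [c ->]; exists (p%:R ^+ (k - j) * c); rewrite mulrA -exprD subnKC.
Qed.

Lemma pdvd_pexpM j k x : pdvd k x -> pdvd (j + k) (p%:R ^+ j * x).
Proof. by move=> [c ->]; exists c; rewrite mulrA exprD. Qed.

Lemma pdvd_mulrn k m (z : A) : (p ^ k %| m)%N -> pdvd k (z *+ m).
Proof.
by case/dvdnP=> e ->; exists (z *+ e); rewrite mulrnA -[_ *+ (p ^ k)%N]mulr_natr natrX mulrC.
Qed.

Lemma pdvd_subX k x y i : pdvd k (x - y) -> pdvd k (x ^+ i - y ^+ i).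
Proof. by rewrite subrXX; apply: pdvdMr. Qed.

(* From x^p - y^p = (x - y) * \sum_i x^(p-1-i) y^i, whose second factor is
   congruent to p y^(p-1) modulo x - y. *)
Lemma pdvd_subXp k x y : (1 <= k)%N -> pdvd k (x - y) -> pdvd k.+1 (x ^+ p - y ^+ p).
Proof.
move=> k_gt0 dxy; rewrite subrXX.
have dsum : pdvd 1%N (\sum_(i < p) x ^+ (p.-1 - i) * y ^+ i).
  have -> : \sum_(i < p) x ^+ (p.-1 - i) * y ^+ i =
     \sum_(i < p) (x ^+ (p.-1 - i) - y ^+ (p.-1 - i)) * y ^+ i + p%:R * y ^+ p.-1.
    have -> : p%:R * y ^+ p.-1 = \sum_(i < p) y ^+ (p.-1 - i) * y ^+ i.
      rewrite (eq_bigr (fun _ => y ^+ p.-1)) ?sumr_const ?card_ord ?mulr_natl //.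
      by move=> i _; rewrite -exprD subnK //; have := ltn_ord i; lia.
    by rewrite -big_split /=; apply: eq_bigr => i _; ring.
  apply: pdvdD; last by exists (y ^+ p.-1); rewrite expr1.
  by apply/pdvd_sum => i; apply/pdvdMr/pdvd_subX/(pdvd_leq k_gt0).
case: dxy => c ->; case: dsum => d ->; exists (c * d).
by rewrite expr1 exprSr mulrACA.
Qed.

Lemma pdvd_subXpn k j x y : (1 <= k)%N -> pdvd k (x - y) ->
  pdvd (k + j) (x ^+ (p ^ j) - y ^+ (p ^ j)).
Proof.
move=> k_gt0 dxy; elim: j => [|j IH]; first by rewrite addn0 !expr1.
by rewrite addnS expnSr !exprM; apply: pdvd_subXp => //; lia.
Qed.

Lemma pdvd_binomial_tail q x d : prime p -> (1 <= q)%N ->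
  pdvd q.+2 ((x + p%:R * d) ^+ (p ^ q) - (x ^+ (p ^ q) + x ^+ (p ^ q).-1 * (p%:R * d) *+ (p ^ q)
             + x ^+ (p ^ q - 2) * (p%:R * d) ^+ 2 *+ 'C(p ^ q, 2))).
Proof.
move=> p_pr q_gt0.
rewrite exprDn_split3 ?prime_expn_gt1 // addrC addKr; apply: pdvd_sum => i.
rewrite exprMn -natrX mulr_natl mulrnAr -mulrnA mulnC; apply: pdvd_mulrn.
apply: dvdn_bin_exp => //; last by rewrite orbT.
by have := ltn_ord i; lia.
Qed.

Hypothesis p_torsionfree : forall a : A, p%:R * a = 0 -> a = 0.

Lemma mul_pexp_inj k : injective (fun x : A => p%:R ^+ k * x).
Proof.
move=> x y /= eq_pxy; apply/eqP; rewrite -subr_eq0; apply/eqP.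
have : p%:R ^+ k * (x - y) = 0 by rewrite mulrBr eq_pxy subrr.
elim: k (x - y) {eq_pxy} => [|k IH] z; first by rewrite mul1r.
by rewrite exprSr -mulrA => /IH /p_torsionfree.
Qed.

Lemma eq_modp_pexpM k x y : pdvd k.+1 (p%:R ^+ k * (x - y)) -> exists b, x = y + p%:R * b.
Proof.
case=> c; rewrite exprSr -mulrA => /mul_pexp_inj eq_xy.
by exists c; rewrite -eq_xy addrC subrK.
Qed.

End PDivisibility.

Section Ghost.

Variables (A : comPzRingType) (p : nat).
Local Notation gh := (@ghost A p).

Lemma ghost_recr x m :
  gh x m = \sum_(i < m) (p ^ i)%N%:R * x i ^+ (p ^ (m - i))%N + (p ^ m)%N%:R * x m.
Proof. by rewrite /ghost big_ord_recr /= subnn expn0 expr1. Qed.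

Lemma ghost0 x : gh x 0 = x 0%N.
Proof. by rewrite /ghost big_ord1 expn0 expr1 mul1r. Qed.

Lemma eq_ghost x y m : (forall i, (i <= m)%N -> x i = y i) -> gh x m = gh y m.
Proof. by move=> eq_xy; apply: eq_bigr => i _; rewrite eq_xy // -ltnS. Qed.

Hypothesis p_gt0 : (0 < p)%N.

Let zero_exprp n : (0 : A) ^+ (p ^ n)%N = 0.
Proof. by rewrite expr0n expn_eq0 eqn0Ngt p_gt0. Qed.

Lemma ghost_teich a m : gh (teich a) m = a ^+ (p ^ m)%N.
Proof.
rewrite /ghost big_ord_recl mul1r subn0 big1 ?addr0 // => i _.
by rewrite zero_exprp mulr0.
Qed.

Lemma ghost_wzero m : gh (wzero A) m = 0.
Proof. by apply: big1 => i _; rewrite zero_exprp mulr0. Qed.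

Lemma ghost_verschiebung x m : gh (verschiebung x) m.+1 = p%:R * gh x m.
Proof.
rewrite /ghost big_ord_recl zero_exprp mulr0 add0r mulr_sumr.
by apply: eq_bigr => i _; rewrite subSS expnS natrM mulrA.
Qed.

Lemma ghost_iter_verschiebung i x m : gh (iter i (@verschiebung A) x) m =
  if (i <= m)%N then (p ^ i)%N%:R * gh x (m - i) else 0.
Proof.
elim: i m => [|i IH] m; first by rewrite mul1r subn0.
case: m => [|m]; first by rewrite iterS ghost0.
rewrite iterS ghost_verschiebung IH ltnS subSS; case: ifP => _; last by rewrite mulr0.
by rewrite expnS natrM mulrA.
Qed.

Hypothesis p_torsionfree : forall a : A, p%:R * a = 0 -> a = 0.

Lemma ghost_inj N x y : (forall m, (m <= N)%N -> gh x m = gh y m) ->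
  forall i, (i <= N)%N -> x i = y i.
Proof.
elim: N => [|N IH] eq_gh i.
  by rewrite leqn0 => /eqP ->; have := eq_gh 0%N (leqnn 0); rewrite !ghost0.
have eq_le : forall i, (i <= N)%N -> x i = y i.
  by apply: IH => m le_mN; apply: eq_gh; apply: leqW.
rewrite leq_eqVlt => /orP[/eqP ->|]; last exact: eq_le.
have := eq_gh N.+1 (leqnn _); rewrite !ghost_recr.
rewrite (eq_bigr (fun k : 'I_N.+1 => (p ^ k)%N%:R * y k ^+ (p ^ (N.+1 - k))%N)).
  by move/addrI; rewrite natrX; apply: mul_pexp_inj.
by move=> k _; rewrite eq_le // -ltnS.
Qed.

End Ghost.

Section Witt.

Variables (A : comPzRingType) (p : nat) (phi : {rmorphism A -> A}).
Hypothesis p_torsionfree : forall a : A, p%:R * a = 0 -> a = 0.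
Hypothesis phi_frob : forall a : A, exists b : A, phi a = a ^+ p + p%:R * b.
Local Notation gh := (@ghost A p).

Lemma pdvd_phi_expp y j : pdvd p j.+1 (phi (y ^+ (p ^ j)%N) - y ^+ (p ^ j.+1)%N).
Proof.
have [b phiE] := phi_frob y.
rewrite rmorphXn expnS exprM -add1n; apply: pdvd_subXpn => //.
by exists b; rewrite phiE expr1 addrAC subrr add0r.
Qed.

Lemma ghost_phi_cong x m : pdvd p m.+1 (gh x m.+1 - phi (gh x m)).
Proof.
rewrite ghost_recr /ghost rmorph_sum addrAC -sumrB.
apply: pdvdD; last by rewrite natrX; exists (x m.+1).
apply: pdvd_sum => i; rewrite rmorphM rmorph_nat -mulrBr natrX.
have le_im : (i <= m)%N by rewrite -ltnS.
apply: (@pdvd_leq _ _ _ (i + (m - i).+1)); first lia.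
apply: pdvd_pexpM; rewrite -opprB subSn //; apply/pdvdN/pdvd_phi_expp.
Qed.

Lemma dwork_trunc w : (forall m, pdvd p m.+1 (w m.+1 - phi (w m))) ->
  forall N, exists x, forall m, (m < N)%N -> gh x m = w m.
Proof.
move=> w_cong; elim=> [|N [x ghx]]; first by exists (wzero A).
have [c residueE] : pdvd p N (w N - \sum_(i < N) (p ^ i)%N%:R * x i ^+ (p ^ (N - i))%N).
  case: N ghx => [|k] ghx; first by exists (w 0%N); rewrite big_ord0 subr0 mul1r.
  have -> : w k.+1 - \sum_(i < k.+1) (p ^ i)%N%:R * x i ^+ (p ^ (k.+1 - i))%N =
      (w k.+1 - phi (w k)) - (gh x k.+1 - phi (gh x k)) + (p ^ k.+1)%N%:R * x k.+1.
    by rewrite (ghx k (ltnSn k)) [gh x k.+1]ghost_recr; ring.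
  by apply: pdvdD; [apply/pdvdB/ghost_phi_cong | rewrite natrX; exists (x k.+1)].
exists (fun i => if i == N then c else x i) => m; rewrite ltnS leq_eqVlt.
case/orP=> [/eqP ->|lt_mN].
  rewrite ghost_recr eqxx natrX; under eq_bigr => i _ do rewrite ltn_eqF //.
  by rewrite -residueE addrC subrK.
by rewrite -(ghx m lt_mN); apply: eq_ghost => i le_im; rewrite ifN // neq_ltn; lia.
Qed.

Lemma dwork w : (forall m, pdvd p m.+1 (w m.+1 - phi (w m))) ->
  exists x, forall m, gh x m = w m.
Proof.
move=> w_cong.
have [f ghf] : exists f : nat -> nat -> A, forall N m, (m <= N)%N -> gh (f N) m = w m.
  exists (fun N => proj1_sig (constructive_indefinite_description _
                                (dwork_trunc w_cong N.+1))) => N.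
  by case: constructive_indefinite_description.
exists (fun i => f i i) => m; rewrite -(ghf m m (leqnn m)); apply: eq_ghost => i le_im.
by apply: (ghost_inj p_torsionfree _ (leqnn i)) => j le_ji; rewrite !ghf //; lia.
Qed.

Lemma ghost_epsilon w : (forall m, pdvd p m.+1 (w m.+1 - phi (w m))) ->
  forall m, gh (epsilon (inhabits (wzero A)) (fun z => forall m, gh z m = w m)) m = w m.
Proof.
move=> w_cong; apply: (epsilon_spec _ (fun z => forall m, gh z m = w m)).
exact: dwork.
Qed.

Lemma ghost_wadd x y m : gh (wadd p x y) m = gh x m + gh y m.
Proof.
apply: (ghost_epsilon (w := fun m => gh x m + gh y m)) => {}m.
by rewrite rmorphD opprD addrACA; apply/pdvdD/ghost_phi_cong/ghost_phi_cong.
Qed.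

Lemma ghost_wsub x y m : gh (wsub p x y) m = gh x m - gh y m.
Proof.
apply: (ghost_epsilon (w := fun m => gh x m - gh y m)) => {}m.
have subrACB (a b c d : A) : a - b - (c - d) = (a - c) - (b - d) by ring.
by rewrite rmorphB subrACB; apply/pdvdB/ghost_phi_cong/ghost_phi_cong.
Qed.

Lemma ghost_s_phi a m : gh (s_phi p phi a) m = iter m phi a.
Proof.
by apply: (ghost_epsilon (w := fun m => iter m phi a)) => {}m; rewrite subrr; apply: pdvd0.
Qed.

Hypothesis p_gt0 : (0 < p)%N.

Lemma ghost_DeltaW x m :
  p%:R * gh (DeltaW p phi x) m = gh x m.+1 - iter m.+1 phi (x 0%N).
Proof.
set z := wsub p x (s_phi p phi (x 0%N)).
have z0 : z 0%N = 0 by rewrite -(ghost0 p) ghost_wsub ghost0 ghost_s_phi subrr.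
have : gh (verschiebung (DeltaW p phi x)) m.+1 = gh z m.+1.
  by apply: eq_ghost => -[|i] _.
by rewrite ghost_verschiebung // => ->; rewrite ghost_wsub ghost_s_phi.
Qed.

Definition DeltaWn k a := iter k (DeltaW p phi) (teich a).

Lemma expp_Delta_ghost a k m : a ^+ (p ^ (k + m))%N =
  \sum_(s < k) (p ^ s)%N%:R * iter (k + m - s) phi (Delta p phi s a)
  + (p ^ k)%N%:R * gh (DeltaWn k a) m.
Proof.
elim: k m => [|k IH] m; first by rewrite big_ord0 add0r mul1r ghost_teich.
rewrite addSnnS IH big_ord_recr /= -addrA addKn; congr (_ + _).
have := ghost_DeltaW (DeltaWn k a) m.
rewrite -/(DeltaWn k.+1 a) /Delta -/(DeltaWn k a) expnSr natrM -mulrA => ->.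
by rewrite mulrBr addrC subrK.
Qed.

Lemma expp_Delta_sum a n :
  a ^+ (p ^ n)%N = \sum_(s < n.+1) (p ^ s)%N%:R * iter (n - s) phi (Delta p phi s a).
Proof.
rewrite -[n in (p ^ n)%N]addn0 expp_Delta_ghost big_ord_recr /= subnn ghost0.
by congr (_ + _); apply: eq_bigr => s _; rewrite addn0.
Qed.

Lemma Delta1E b : p%:R * Delta p phi 1 b = b ^+ p - phi b.
Proof.
have := expp_Delta_ghost b 1 0; rewrite big_ord1 mul1r expn1 ghost0 addn0 subn0 => ->.
by rewrite addrC addKr.
Qed.

Lemma Delta_expp a q :
  (p ^ q)%N%:R * Delta p phi q.+1 a = Delta p phi 1 (a ^+ (p ^ q)%N).
Proof.
have phiE : phi (a ^+ (p ^ q)%N) =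
    \sum_(s < q.+1) (p ^ s)%N%:R * iter (q.+1 - s) phi (Delta p phi s a).
  rewrite expp_Delta_sum rmorph_sum; apply: eq_bigr => s _.
  by rewrite rmorphM rmorph_nat subSn ?iterS // -ltnS.
apply: (@mul_pexp_inj _ _ p_torsionfree 1%N); rewrite /= expr1 Delta1E -exprM -expnSr.
have := expp_Delta_ghost a q.+1 0; rewrite addn0 ghost0 phiE => ->.
by rewrite addrC addKr expnS natrM mulrA.
Qed.

Lemma ghost_big_wadd n (F : 'I_n -> nat -> A) m :
  gh (\big[wadd p/wzero A]_(i < n) F i) m = \sum_(i < n) gh (F i) m.
Proof.
elim: n F => [|n IH] F; first by rewrite !big_ord0 ghost_wzero.
by rewrite !big_ord_recl ghost_wadd IH.
Qed.

Lemma teich_decomposition a n : weq_n n.+1 (teich a)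
    (wadd p (\big[wadd p/wzero A]_(i < n)
               iter i (@verschiebung A) (s_phi p phi (Delta p phi i a)))
            (iter n (@verschiebung A) (teich (Delta p phi n a)))).
Proof.
move=> i; rewrite ltnS => le_in; apply: (ghost_inj p_torsionfree _ le_in) => m le_mn.
rewrite ghost_wadd ghost_big_wadd ghost_teich // ghost_iter_verschiebung //.
under eq_bigr => j _ do rewrite ghost_iter_verschiebung // ghost_s_phi.
move: le_mn; rewrite leq_eqVlt => /orP[/eqP ->|lt_mn].
  rewrite leqnn subnn ghost_teich // expr1 expp_Delta_sum big_ord_recr /= subnn.
  by congr (_ + _); apply: eq_bigr => j _; rewrite ifT // ltnW.
rewrite leqNgt lt_mn addr0 -big_mkcond /= expp_Delta_sum.
by rewrite (big_ord_widen n (fun j => (p ^ j)%N%:R * iter (m - j) phi (Delta p phi j a))).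
Qed.

Hypothesis p_pr : prime p.

Lemma pdvd_Delta_expansion a q : (1 <= q)%N ->
  pdvd p q.+2 (p%:R ^+ q.+1 * (Delta p phi q.+1 a - a ^+ (p ^ q.+1 - p)%N * Delta p phi 1 a)
               + a ^+ (p ^ q.+1 - 2 * p)%N * Delta p phi 1 a ^+ 2
                 *+ ('C(p ^ q, 2) * p ^ 2)).
Proof.
move=> q_gt0.
have expE1 : (p ^ q.+1 - p = p * (p ^ q).-1)%N by rewrite expnS -subn1 mulnBr muln1.
have expE2 : (p ^ q.+1 - 2 * p = p * (p ^ q - 2))%N by rewrite expnS mulnBr (mulnC p 2).
set X := a ^+ p; set d := Delta p phi 1 a; set Q := (p ^ q)%N.
rewrite expE1 expE2 !exprM -/X.
have phiE : phi a = X + p%:R * - d by rewrite mulrN Delta1E opprB addrC subrK.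
have DeltaE : p%:R ^+ q.+1 * Delta p phi q.+1 a = X ^+ Q - (X + p%:R * - d) ^+ Q.
  by rewrite exprS -natrX -mulrA Delta_expp Delta1E rmorphXn -phiE -!exprM mulnC.
have := pdvd_binomial_tail X (- d) p_pr q_gt0; rewrite -/Q => /pdvdN.
set T := - _; suff -> : p%:R ^+ q.+1 * (Delta p phi q.+1 a - X ^+ Q.-1 * d)
    + X ^+ (Q - 2) * d ^+ 2 *+ ('C(Q, 2) * p ^ 2) = T by [].
have QE : Q%:R = p%:R ^+ q :> A by rewrite natrX.
rewrite /T mulrBr DeltaE -[_ *+ Q]mulr_natr -[_ *+ 'C(Q, 2)]mulr_natr.
by rewrite -[_ *+ ('C(Q, 2) * _)]mulr_natr natrM natrX QE exprS; ring.
Qed.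

Lemma Delta_mod_p_odd a q : odd p -> (1 <= q)%N ->
  exists b, Delta p phi q.+1 a = a ^+ (p ^ q.+1 - p)%N * Delta p phi 1 a + p%:R * b.
Proof.
move=> odd_p q_gt0; apply: (@eq_modp_pexpM _ _ p_torsionfree q.+1).
have bin2_div : pdvd p q.+2 (a ^+ (p ^ q.+1 - 2 * p)%N * Delta p phi 1 a ^+ 2
                              *+ ('C(p ^ q, 2) * p ^ 2)).
  by apply/pdvd_mulrn/dvdn_bin_exp; rewrite ?odd_p ?prime_expn_gt1.
by have := pdvdB (pdvd_Delta_expansion a q_gt0) bin2_div; rewrite addrK.
Qed.

Lemma Delta_mod_2 a q : p = 2 -> (1 <= q)%N ->
  exists b, Delta p phi q.+1 a = a ^+ (p ^ q.+1 - p)%N * Delta p phi 1 a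
                 + a ^+ (p ^ q.+1 - 2 * p)%N * Delta p phi 1 a ^+ p + p%:R * b.
Proof.
move=> p2 q_gt0; apply: (@eq_modp_pexpM _ _ p_torsionfree q.+1).
have -> : Delta p phi 1 a ^+ p = Delta p phi 1 a ^+ 2 by rewrite p2.
set Y := a ^+ (p ^ q.+1 - 2 * p)%N * Delta p phi 1 a ^+ 2.
have bin2_div : pdvd p q.+2 (Y *+ ('C(p ^ q, 2) * p ^ 2 + p ^ q.+1)).
  by apply: pdvd_mulrn; rewrite mulnC p2; apply: dvdn_bin2_exp2.
have := pdvdB (pdvd_Delta_expansion a q_gt0) bin2_div.
rewrite mulrnDr opprD addrA addrK -[Y *+ _]mulr_natr natrX [Y * _]mulrC -mulrBr.
by rewrite opprD addrA.
Qed.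

End Witt.

Theorem theorem3p6 (A : comPzRingType) (p : nat) (phi : {rmorphism A -> A})
  (hp : prime p)
  (htf : forall a : A, p%:R * a = 0 -> a = 0)
  (hfrob : forall a : A, exists b : A, phi a = a ^+ p + p%:R * b)
  (a : A) (n : nat) (hn : (1 <= n)%N) :
  weq_n n.+1 (teich a)
    (wadd p (\big[wadd p/wzero A]_(i < n)
               iter i (@verschiebung A) (s_phi p phi (Delta p phi i a)))
            (iter n (@verschiebung A) (teich (Delta p phi n a))))
  /\ a ^+ (p ^ n)%N = \sum_(s < n.+1) (p ^ s)%N%:R * iter (n - s) phi (Delta p phi s a)
  /\ (p ^ n.-1)%N%:R * Delta p phi n a = Delta p phi 1 (a ^+ (p ^ n.-1)%N)
  /\ ((2 <= n)%N ->
      (p = 2%N -> exists b : A,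
         Delta p phi n a = a ^+ (p ^ n - p)%N * Delta p phi 1 a
                           + a ^+ (p ^ n - 2 * p)%N * (Delta p phi 1 a) ^+ p
                           + p%:R * b)
      /\ (odd p -> exists b : A,
         Delta p phi n a = a ^+ (p ^ n - p)%N * Delta p phi 1 a + p%:R * b)).
Proof.
have p_gt0 := prime_gt0 hp.
split; first exact: (teich_decomposition htf hfrob p_gt0).
split; first exact: (expp_Delta_sum htf hfrob p_gt0).
case: n hn => // q _; split; first exact: (Delta_expp htf hfrob p_gt0).
rewrite ltnS => q_gt0; split => [p2 | odd_p].
- exact: (Delta_mod_2 htf hfrob p_gt0 hp).
- exact: (Delta_mod_p_odd htf hfrob p_gt0 hp).
Qed.
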